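(* Let $\mathsf{K}$ be a variety, $\mathbf{B}\in\mathsf{K}$, and $\mathbf{A}\leq\mathbf{B}$ fully epic in $\mathsf{K}$. Then $\theta=\mathrm{Cg}^{\mathbf{B}}(\theta{\upharpoonright}_A)$ for every congruence $\theta$ of $\mathbf{B}$.
   Context: $\mathrm{Cg}^{\mathbf{B}}(X)$ is the least congruence of $\mathbf{B}$ containing $X\subseteq B\times B$; $\theta{\upharpoonright}_A=\theta\cap(A\times A)$. $\mathbf{A}\leq\mathbf{B}$ is epic in $\mathsf{K}$ if for all $\mathbf{C}\in\mathsf{K}$ and homomorphisms $g,h\colon\mathbf{B}\to\mathbf{C}$, $g{\upharpoonright}_A=h{\upharpoonright}_A$ implies $g=h$; it is full in $\mathsf{K}$ if it is proper, almost total ($B=\mathrm{Sg}^{\mathbf{B}}(A\cup\{b\})$ for some $b$), and every congruence $\theta\neq\mathrm{id}_B$ of $\mathbf{B}$ relates each $b\in B$ to some $a\in A$; fully epic means full and epic. *)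

From mathcomp Require Import all_boot.
Set Implicit Arguments.
Unset Strict Implicit.
Unset Printing Implicit Defensive.

Record signature := Signature { op_sym : Type; arity : op_sym -> nat }.

Record algebra (S : signature) := Algebra {
  carrier :> Type;
  interp : forall o : op_sym S, ('I_(arity o) -> carrier) -> carrier }.
Arguments interp {S} a o _.

Inductive term (S : signature) (X : Type) : Type :=
| tvar : X -> term S X
| tapp : forall o : op_sym S, ('I_(arity o) -> term S X) -> term S X.

Fixpoint eval_term (S : signature) (X : Type) (A : algebra S) (v : X -> A)
  (t : term S X) : A :=
  match t with
  | tvar x => v x
  | tapp o ts => interp A o (fun i => eval_term v (ts i))
  end.

Definition identity (S : signature) := (term S nat * term S nat)%type.

Definition satisfies (S : signature) (A : algebra S) (e : identity S) : Prop :=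
  forall v : nat -> A, eval_term v e.1 = eval_term v e.2.

(* A class of algebras K is a variety: it is the class of all models of
   some set of identities (Birkhoff: equivalently, closed under H, S, P). *)
Definition is_variety (S : signature) (K : algebra S -> Prop) : Prop :=
  exists E : identity S -> Prop,
    forall A : algebra S, K A <-> (forall e, E e -> satisfies A e).

Definition is_hom (S : signature) (B C : algebra S) (g : B -> C) : Prop :=
  forall (o : op_sym S) (args : 'I_(arity o) -> B),
    g (interp B o args) = interp C o (fun i => g (args i)).

(* Subuniverses (subalgebras A <= B are given by their universes A ⊆ B). *)
Definition subuniverse (S : signature) (B : algebra S) (A : B -> Prop) : Prop :=
  forall (o : op_sym S) (args : 'I_(arity o) -> B),
    (forall i, A (args i)) -> A (interp B o args).

Definition Sg (S : signature) (B : algebra S) (X : B -> Prop) : B -> Prop :=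
  fun x => forall P : B -> Prop, subuniverse P -> (forall y, X y -> P y) -> P x.

Definition is_congruence (S : signature) (B : algebra S) (th : B -> B -> Prop)
  : Prop :=
  [/\ (forall x, th x x),
      (forall x y, th x y -> th y x),
      (forall x y z, th x y -> th y z -> th x z) &
      (forall (o : op_sym S) (a b : 'I_(arity o) -> B),
          (forall i, th (a i) (b i)) -> th (interp B o a) (interp B o b))].

Definition Cg (S : signature) (B : algebra S) (X : B -> B -> Prop)
  : B -> B -> Prop :=
  fun x y => forall th, is_congruence th -> (forall a b, X a b -> th a b) -> th x y.

(* θ↾_A = θ ∩ (A × A), as a relation on B. *)
Definition restrict_rel (S : signature) (B : algebra S) (th : B -> B -> Prop)
  (A : B -> Prop) : B -> B -> Prop :=
  fun x y => [/\ A x, A y & th x y].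

Definition epic_in (S : signature) (K : algebra S -> Prop) (B : algebra S)
  (A : B -> Prop) : Prop :=
  forall (C : algebra S), K C ->
  forall g h : B -> C, is_hom g -> is_hom h ->
    (forall a, A a -> g a = h a) -> forall b, g b = h b.

(* A <= B is full in K: proper, almost total, and every non-identity
   congruence of B relates each element of B to some element of A. *)
Definition full_in (S : signature) (K : algebra S -> Prop) (B : algebra S)
  (A : B -> Prop) : Prop :=
  [/\ (exists b, ~ A b),
      (exists b, forall x, Sg (fun y => A y \/ y = b) x) &
      (forall th, is_congruence th -> ~ (forall x y, th x y <-> x = y) ->
         forall b, exists2 a, A a & th b a)].

Definition fully_epic_in (S : signature) (K : algebra S -> Prop) (B : algebra S)
  (A : B -> Prop) : Prop :=
  full_in K A /\ epic_in K A.

(* Let Φ = Cg(θ↾A) ⊆ θ. If Φ is not the identity, fullness makes every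
   element Φ-equivalent to an element of A, and two such representatives of
   θ-related elements are related by θ↾A ⊆ Φ, so θ ⊆ Φ. If Φ is the
   identity, θ is injective on A; a non-identity θ then sends each b to its
   unique θ-equivalent p b in A, and p : B → B is an endomorphism fixing A.
   Epicity (with C := B) forces p = id, so B = A, contradicting properness. *)
From Stdlib Require Import Classical ClassicalEpsilon.
From mathcomp Require Import all_boot.

Set Implicit Arguments.
Unset Strict Implicit.

Section Congruences.

Variables (S : signature) (B : algebra S).

Lemma Cg_congruence (X : B -> B -> Prop) : is_congruence (Cg X).
Proof.
split.
- by move=> x th [refl _ _ _] _; apply: refl.
- by move=> x y Hxy th thc HX; case: (thc) => _ sym _ _; apply: sym; apply: Hxy.
- move=> x y z Hxy Hyz th thc HX; case: (thc) => _ _ trans _.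
  by apply: (trans _ y); [apply: Hxy | apply: Hyz].
- move=> o a b Hab th thc HX; case: (thc) => _ _ _ compat.
  by apply: compat => i; apply: Hab.
Qed.

Lemma sub_Cg (X : B -> B -> Prop) x y : X x y -> Cg X x y.
Proof. by move=> Hxy th _; apply. Qed.

Lemma Cg_min (X th : B -> B -> Prop) :
  is_congruence th -> (forall x y, X x y -> th x y) ->
  forall x y, Cg X x y -> th x y.
Proof. by move=> thc HX x y; apply. Qed.

Lemma Cg_restrict_sub (th : B -> B -> Prop) (A : B -> Prop) :
  is_congruence th -> forall x y, Cg (restrict_rel th A) x y -> th x y.
Proof. by move=> thc; apply: Cg_min => // x y []. Qed.

Lemma le_congruence_of_covering (th phi : B -> B -> Prop) (A : B -> Prop) :
  is_congruence th -> is_congruence phi ->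
  (forall x y, phi x y -> th x y) ->
  (forall x y, restrict_rel th A x y -> phi x y) ->
  (forall b, exists2 a, A a & phi b a) ->
  forall x y, th x y -> phi x y.
Proof.
move=> [_ th_sym th_trans _] [_ phi_sym phi_trans _] phi_th thA_phi cover x y Hxy.
have [a Aa Hxa] := cover x; have [a' Aa' Hya'] := cover y.
have Haa' : th a a'.
  apply: (th_trans _ x); first exact/th_sym/phi_th.
  by apply: (th_trans _ y) => //; apply: phi_th.
apply: (phi_trans _ a) => //; apply: (phi_trans _ a'); first exact: thA_phi.
exact: phi_sym.
Qed.

Lemma retraction_is_hom (th : B -> B -> Prop) (A : B -> Prop) (p : B -> B) :
  is_congruence th -> subuniverse A ->
  (forall a a', A a -> A a' -> th a a' -> a = a') ->
  (forall b, A (p b)) -> (forall b, th b (p b)) -> is_hom p.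
Proof.
move=> [_ th_sym th_trans th_compat] subA th_inj pA th_p o args.
apply: th_inj; [exact: pA | by apply: subA => i; apply: pA |].
apply: (th_trans _ (interp B o args)); first exact/th_sym/th_p.
by apply: th_compat => i.
Qed.

End Congruences.

Lemma epic_retraction_total (S : signature) (K : algebra S -> Prop)
  (B : algebra S) (A : B -> Prop) (p : B -> B) :
  epic_in K A -> K B -> is_hom p ->
  (forall b, A (p b)) -> (forall a, A a -> p a = a) -> forall b, A b.
Proof.
move=> epic KB hom_p pA p_fixA b.
by rewrite -(epic B KB p id hom_p (fun _ _ => erefl) p_fixA b).
Qed.

Lemma epic_no_injective_covering_congruence (S : signature)
  (K : algebra S -> Prop) (B : algebra S) (A : B -> Prop) (th : B -> B -> Prop) :
  epic_in K A -> K B -> subuniverse A -> is_congruence th ->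
  (forall a a', A a -> A a' -> th a a' -> a = a') ->
  (forall b, exists2 a, A a & th b a) -> forall b, A b.
Proof.
move=> epic KB subA thc th_inj cover.
have rep b : {a | A a /\ th b a}.
  by apply: constructive_indefinite_description; have [a] := cover b; exists a.
pose p b := sval (rep b).
have pA b : A (p b) by rewrite /p; case: (rep b) => ? [].
have th_p b : th b (p b) by rewrite /p; case: (rep b) => ? [].
apply: (epic_retraction_total (p := p) epic KB) => //.
- exact: retraction_is_hom thc subA th_inj pA th_p.
- by move=> a Aa; apply/esym/th_inj => //.
Qed.

Theorem mainTheorem13 (S : signature) (K : algebra S -> Prop) (B : algebra S)
  (A : B -> Prop) :
  is_variety K -> K B -> subuniverse A -> fully_epic_in K A ->
  forall th : B -> B -> Prop, is_congruence th ->
    forall x y, th x y <-> Cg (restrict_rel th A) x y.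
Proof.
move=> _ KB subA [[[b0 nAb0] _ full] epic] th thc x y.
set phi := Cg (restrict_rel th A).
have phic : is_congruence phi := Cg_congruence _.
split; last exact: Cg_restrict_sub.
have [phi_id | phi_nid] := classic (forall u v, phi u v <-> u = v); last first.
  apply: (le_congruence_of_covering thc phic) => //.
  - exact: Cg_restrict_sub.
  - exact: sub_Cg.
  - exact: full.
have th_inj a a' : A a -> A a' -> th a a' -> a = a'.
  by move=> Aa Aa' Haa'; apply/phi_id; apply: sub_Cg.
have [th_id | th_nid] := classic (forall u v, th u v <-> u = v).
  by move/th_id => ->; case: phic.
case: nAb0.
exact: epic_no_injective_covering_congruence epic KB subA thc th_inj (full _ thc th_nid) b0.
Qed.
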